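(* Let $G$ be a finite group such that the star class of $\mathcal{P}(G)$ is $\mathcal{S}=\{1\}$. Let $C=[y]_{\mathtt{N}}$ be a critical class. Then there exists $x\in G\setminus\hat{C}$ such that $|[x]_{\mathtt{N}}|\leq|C|$ and $x$ is adjacent to $y$ in $\mathcal{P}(G)$ if and only if $C$ is of the first type.
   Context: $o(g)$ is the order of $g$. The power graph $\mathcal{P}(G)$ has vertex set $G$, and distinct $x,y$ are adjacent iff one is a positive integer power of the other. $N[x]$ is the closed neighbourhood of $x$ in $\mathcal{P}(G)$. $x\mathtt{N}y$ iff $N[x]=N[y]$, with classes $[x]_{\mathtt{N}}$; $x\diamond y$ iff $\langle x\rangle=\langle y\rangle$. The star class $\mathcal{S}=[1]_{\mathtt{N}}$ is the set of vertices adjacent to all other vertices. An $\mathtt{N}$-class $C\ne\mathcal{S}$ is of the first type if it is also a $\diamond$-class. For $X\subseteq G$, $N[X]:=\bigcap_{x\in X}N[x]$ and $\hat{X}:=N[N[X]]$. A critical class is an $\mathtt{N}$-class $C$ with $\hat{C}=C\cup\{1\}$ such that $|\hat{C}|=p^r$ for some prime $p$ and integer $r\geq2$. *)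

From mathcomp Require Import all_boot all_fingroup.
Set Implicit Arguments. Unset Strict Implicit. Unset Printing Implicit Defensive.
Local Open Scope group_scope.

Section PowerGraph.
Variable gT : finGroupType.

(* x is a positive integer power of y: x = y^k for some k >= 1.
   Since y ^+ #[y] = 1, it suffices to let k range over 1..#[y]. *)
Definition is_pow (x y : gT) : bool := [exists k : 'I_#[y], x == y ^+ k.+1].

Definition padj (x y : gT) : bool := (x != y) && (is_pow x y || is_pow y x).

Definition Nb (x : gT) : {set gT} := [set z | (z == x) || padj x z].

Definition Nclass (x : gT) : {set gT} := [set z | Nb z == Nb x].

Definition Dclass (x : gT) : {set gT} := [set z | <[z]> == <[x]>].

Definition star_class : {set gT} := Nclass 1.

Definition NX (X : {set gT}) : {set gT} := \bigcap_(x in X) Nb x.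
Definition hat (X : {set gT}) : {set gT} := NX (NX X).

Definition first_type (C : {set gT}) : Prop :=
  (exists y, C = Nclass y) /\ C != star_class /\ exists x, C = Dclass x.

Definition critical (C : {set gT}) : Prop :=
  (exists y, C = Nclass y) /\ hat C = C :|: [set 1] /\
  exists p r : nat, prime p /\ (2 <= r)%N /\ #|hat C| = (p ^ r)%N.

End PowerGraph.

From mathcomp Require Import all_boot all_fingroup.
From mathcomp Require Import cyclic pgroup.
Set Implicit Arguments. Unset Strict Implicit. Unset Printing Implicit Defensive.
Local Open Scope group_scope.

(* Since N[x] only depends on <x>, an N-class is a union of diamond-classes,
   all inside the cyclic group generated by one of its elements of maximal
   order.  If the critical class C = [y]_N contains two diamond-classes, this
   cyclic group <t> is a q-group, so hat C = <t> has order p^r.  An x adjacent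
   to y outside <t> then properly contains <t>, and is itself a p-element: an
   element of order p p' in <x> would lie in N[c] = N[t] for the element c of
   order p of C, without being comparable to t.  So the phi(#[x]) >= p^r > |C|
   generators of <x>, all in [x]_N, are too many.  Conversely, if C is the
   diamond-class of y, then #[y] is not a prime power (otherwise hat C = <y>
   would contain y^p), and for a prime p' <> q dividing #[y] the element x of
   order q in <y> has [x]_N equal to its diamond-class, of size
   q - 1 <= phi(#[y]) = |C|. *)

Lemma leq_pred_totient q n : prime q -> q %| n -> 0 < n -> q.-1 <= totient n.
Proof.
move=> q_pr q_dv_n n_gt0; have [m cop_qm def_n] := pfactor_coprime q_pr n_gt0.
have m_gt0 : 0 < m by move: n_gt0; rewrite def_n muln_gt0 => /andP[].
have lg_gt0 : 0 < logn q n by rewrite logn_gt0 mem_primes q_pr n_gt0.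
rewrite def_n totient_coprime; last by rewrite coprime_sym coprimeXl.
by rewrite totient_pfactor // mulnCA leq_pmulr // muln_gt0 totient_gt0 m_gt0 expn_gt0 prime_gt0.
Qed.

Lemma leq_expn_totient p r n :
  prime p -> p.-nat n -> p ^ r < n -> p ^ r <= totient n.
Proof.
move=> p_pr /p_natP[e ->]; rewrite ltn_exp2l ?prime_gt1 // => lt_re.
have e_gt0 : 0 < e := leq_ltn_trans (leq0n r) lt_re.
rewrite totient_pfactor //; apply: leq_trans (leq_pmull _ _).
  by rewrite leq_exp2l ?prime_gt1 // -ltnS prednK.
by rewrite -subn1 subn_gt0 prime_gt1.
Qed.

Section PowerGraphFacts.
Variable gT : finGroupType.
Implicit Types a b c t u w x y z : gT.

Lemma order_expg_div d a : d %| #[a] -> #[a ^+ (#[a] %/ d)] = d.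
Proof.
move=> d_dv_a; have def_a := divnK d_dv_a.
have d_gt0 := dvdn_gt0 (order_gt0 a) d_dv_a.
have k_gt0 : 0 < #[a] %/ d by rewrite divn_gt0 // dvdn_leq.
rewrite orderXdiv; last by rewrite -{2}def_a dvdn_mulr.
by rewrite -{1}def_a mulKn.
Qed.

Lemma mem_cycle_dvd y a b :
  a \in <[y]> -> b \in <[y]> -> (a \in <[b]>) = (#[a] %| #[b]).
Proof.
by move=> ya yb; rewrite -cycle_subG (cardSg_cyclic (cycle_cyclic y)) // cycle_subG.
Qed.

Lemma eq_cycle_order y a b :
  a \in <[y]> -> b \in <[y]> -> #[a] = #[b] -> <[a]> = <[b]>.
Proof.
move=> ya yb oab; apply/eqP.
by rewrite (eq_subG_cyclic (cycle_cyclic y)) ?cycle_subG // -!orderE oab.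
Qed.

Lemma p_elt_cycle_total p t a b : prime p -> p.-elt t ->
  a \in <[t]> -> b \in <[t]> -> (a \in <[b]>) || (b \in <[a]>).
Proof.
move=> p_pr /p_natP[n ot] a_t b_t.
rewrite (mem_cycle_dvd a_t b_t) (mem_cycle_dvd b_t a_t).
have /(dvdn_pfactor _ _ p_pr)[i _ ->] : #[a] %| p ^ n by rewrite -ot order_dvdG.
have /(dvdn_pfactor _ _ p_pr)[j _ ->] : #[b] %| p ^ n by rewrite -ot order_dvdG.
by rewrite !dvdn_Pexp2l ?prime_gt1 // leq_total.
Qed.

Lemma is_powE x y : is_pow x y = (x \in <[y]>).
Proof.
apply/existsP/idP => [[k /eqP ->] | /cycleP[i ->]]; first exact: mem_cycle.
rewrite -expg_mod_order; have y_gt0 := order_gt0 y.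
case def_k: (i %% #[y]) => [|k].
  have lt_y : #[y].-1 < #[y] by rewrite prednK.
  by exists (Ordinal lt_y); rewrite /= prednK // expg0 expg_order.
have lt_ky : k < #[y] by have := ltn_mod i #[y]; rewrite def_k y_gt0; apply: ltnW.
by exists (Ordinal lt_ky).
Qed.

Lemma padjE x y : padj x y = (x != y) && ((x \in <[y]>) || (y \in <[x]>)).
Proof. by rewrite /padj !is_powE. Qed.

Lemma mem_Nb x z : (z \in Nb x) = (z \in <[x]>) || (x \in <[z]>).
Proof.
rewrite inE padjE; case: (eqVneq z x) => [->|_]; first by rewrite cycle_id.
by rewrite /= orbC.
Qed.

Lemma Nb_id x : x \in Nb x.
Proof. by rewrite mem_Nb cycle_id. Qed.

Lemma eq_Nb_cycle x z : <[x]> = <[z]> -> Nb x = Nb z.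
Proof. by move=> eq_xz; apply/setP => w; rewrite !mem_Nb eq_xz -!cycle_subG eq_xz. Qed.

Lemma Nclass_Nb y z : z \in Nclass y -> Nb z = Nb y.
Proof. by rewrite inE => /eqP. Qed.

Lemma Nclass_id y : y \in Nclass y.
Proof. by rewrite inE. Qed.

Lemma eq_Nclass x y : (Nclass x == Nclass y) = (x \in Nclass y).
Proof.
apply/eqP/idP => [<- | /Nclass_Nb Nxy]; first exact: Nclass_id.
by apply/setP => z; rewrite !inE Nxy.
Qed.

Lemma Dclass_sub_Nclass x : Dclass x \subset Nclass x.
Proof. by apply/subsetP => z; rewrite !inE => /eqP/eq_Nb_cycle->. Qed.

Lemma Dclass_sub_cycle x : Dclass x \subset <[x]>.
Proof. by apply/subsetP => z; rewrite inE => /eqP <-; apply: cycle_id. Qed.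

Lemma card_Dclass x : #|Dclass x| = totient #[x].
Proof. by rewrite totient_gen; apply: eq_card => z; rewrite !inE eq_sym. Qed.

Lemma first_type_NclassE y :
  first_type (Nclass y) <-> y \notin star_class gT /\ Nclass y = Dclass y.
Proof.
rewrite /first_type /star_class eq_Nclass.
split=> [[_ [-> [x def_C]]] | [-> def_C]]; last by split; [exists y | split; [|exists y]].
split=> //; have : y \in Dclass x by rewrite -def_C Nclass_id.
by rewrite def_C inE => /eqP yx; apply/setP => z; rewrite !inE yx.
Qed.

Lemma NX_Nclass y : NX (Nclass y) = Nb y.
Proof.
apply/setP => u; apply/bigcapP/idP => [Nu | Nu w /Nclass_Nb -> //].
exact: Nu (Nclass_id y).
Qed.

Lemma mem_hat_NclassP y u :
  reflect (forall w, w \in Nb y -> u \in Nb w) (u \in hat (Nclass y)).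
Proof. by rewrite /hat NX_Nclass; apply: (iffP bigcapP). Qed.

Lemma p_elt_cycle_sub_hat p y t :
  prime p -> p.-elt t -> t \in Nclass y -> <[t]> \subset hat (Nclass y).
Proof.
move=> p_pr pt /Nclass_Nb Nty; apply/subsetP => u ut; apply/mem_hat_NclassP => w.
rewrite -Nty !mem_Nb => /orP[wt | tw]; first exact: p_elt_cycle_total p_pr pt ut wt.
by rewrite -cycle_subG in tw; rewrite (subsetP tw).
Qed.

Lemma Nclass_sub_cycle y : exists2 t, t \in Nclass y & Nclass y \subset <[t]>.
Proof.
have [t Ct max_t] := @arg_maxnP _ y (fun t => t \in Nclass y) (fun t => #[t]) (Nclass_id y).
exists t => //; apply/subsetP => c Cc.
have : c \in Nb t by rewrite (Nclass_Nb Ct) -(Nclass_Nb Cc) Nb_id.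
rewrite mem_Nb => /orP[// | tc].
suff -> : <[t]> = <[c]> by apply: cycle_id.
by apply/eqP; rewrite eqEcard cycle_subG tc -!orderE; apply: max_t.
Qed.

Lemma Nclass_cycle_p_elt y t k q : t \in Nclass y -> k \in Nclass y ->
  k \in <[t]> -> <[k]> != <[t]> -> prime q -> q %| #[k] -> q.-elt t.
Proof.
move=> Ct Ck kt nkt q_pr q_dv_k.
have Nkt : Nb k = Nb t by rewrite (Nclass_Nb Ck) (Nclass_Nb Ct).
have tq'_k : t.`_q^' \in <[k]>.
  have : t.`_q^' \in Nb k by rewrite Nkt mem_Nb cycle_constt.
  rewrite mem_Nb => /orP[// | k_tq'].
  have /(pnat_dvd q_dv_k) : q^'.-elt k := mem_p_elt (p_elt_constt q^' t) k_tq'.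
  by rewrite pnatE // !inE eqxx.
have k_tq : k \in <[t.`_q]>.
  have : t.`_q \in Nb k by rewrite Nkt mem_Nb cycle_constt.
  rewrite mem_Nb => /orP[tq_k | //].
  have : t \in <[k]> by rewrite -(consttC q t) groupM.
  by rewrite -cycle_subG => tk; rewrite eqEsubset tk cycle_subG kt in nkt.
apply: (mem_p_elt (p_elt_constt q t)).
rewrite -{1}(consttC q t) groupM ?cycle_id //.
by rewrite -cycle_subG in k_tq; apply: (subsetP k_tq).
Qed.

Lemma p_elt_over_cycle p r t c x : prime p -> 1 < r -> #[t] = (p ^ r)%N ->
  c \in <[t]> -> #[c] = p -> Nb c = Nb t -> t \in <[x]> -> p.-elt x.
Proof.
move=> p_pr r_gt1 ot ct oc Nct tx; apply/pnatP => // p' p'_pr p'_dv_x.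
rewrite !inE; apply: contraT => neq_p'p.
have tx_sub : <[t]> \subset <[x]> by rewrite cycle_subG.
have p_dv_x : p %| #[x].
  apply: dvdn_trans (cardSg tx_sub); rewrite -orderE ot.
  by rewrite -{1}(expn1 p) dvdn_exp2l // ltnW.
have cop_pp' : coprime p p' by rewrite prime_coprime // dvdn_prime2 // eq_sym.
have pp'_dv_x : p * p' %| #[x] by rewrite Gauss_dvd // p_dv_x.
set v := x ^+ (#[x] %/ (p * p')); have ov : #[v] = (p * p')%N := order_expg_div pp'_dv_x.
have cv : c \in <[v]>.
  by rewrite (mem_cycle_dvd (subsetP tx_sub c ct) (mem_cycle _ _)) oc ov dvdn_mulr.
have : v \in Nb t by rewrite -Nct mem_Nb cv orbT.
rewrite mem_Nb => /orP[/order_dvdG | /order_dvdG]; rewrite -orderE ov ot.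
  move/(dvdn_trans (dvdn_mull p (dvdnn p'))).
  by rewrite Euclid_dvdX // dvdn_prime2 // (negbTE neq_p'p).
move/(dvdn_trans (dvdn_exp2l p r_gt1)).
by rewrite (expnS p 1) expn1 dvdn_pmul2l ?prime_gt0 // dvdn_prime2 // eq_sym (negbTE neq_p'p).
Qed.

End PowerGraphFacts.

Section TrivialStarClass.
Variable gT : finGroupType.
Hypothesis star1 : star_class gT = [set 1].

Lemma mem1_Nclass (y : gT) : (1 \in Nclass y) = (y == 1).
Proof.
by rewrite -eq_Nclass eq_sym eq_Nclass -[Nclass 1]/(star_class gT) star1 inE.
Qed.

Lemma Nclass_prime_order_cycle (y x : gT) q p' :
  prime q -> prime p' -> q != p' -> q * p' %| #[y] ->
  x \in <[y]> -> #[x] = q -> Nclass x = Dclass x.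
Proof.
move=> q_pr p'_pr neq_qp' qp'_dv_y xy ox.
have p'_dv_y : p' %| #[y] := dvdn_trans (dvdn_mull q (dvdnn p')) qp'_dv_y.
set w := y ^+ (#[y] %/ p'); have ow : #[w] = p' := order_expg_div p'_dv_y.
set u := y ^+ (#[y] %/ (q * p')); have ou : #[u] = (q * p')%N := order_expg_div qp'_dv_y.
have wy : w \in <[y]> := mem_cycle _ _.
have uy : u \in <[y]> := mem_cycle _ _.
have w_notin_Nx : w \notin Nb x.
  rewrite mem_Nb (mem_cycle_dvd wy xy) (mem_cycle_dvd xy wy) ow ox.
  by rewrite !dvdn_prime2 // eq_sym (negbTE neq_qp').
apply/eqP; rewrite eqEsubset Dclass_sub_Nclass andbT.
apply/subsetP => z zx; have Nzx := Nclass_Nb zx; rewrite inE.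
move: w_notin_Nx; rewrite -Nzx mem_Nb negb_or => /andP[w_notin_z _].
have zu : z \in <[u]>.
  have : u \in Nb z by rewrite Nzx mem_Nb (mem_cycle_dvd xy uy) ox ou dvdn_mulr ?orbT.
  rewrite mem_Nb => /orP[uz | //]; rewrite -cycle_subG in uz.
  by rewrite (subsetP uz) ?(mem_cycle_dvd wy uy) ?ow ?ou ?dvdn_mull in w_notin_z.
have zy : z \in <[y]> by apply: (subsetP _ z zu); rewrite cycle_subG.
have z_dv_qp' : #[z] %| q * p' by rewrite -ou -(mem_cycle_dvd zy uy).
have cop_zp' : coprime #[z] p'.
  by rewrite coprime_sym prime_coprime // -ow -(mem_cycle_dvd wy zy).
have z_nt : z != 1.
  apply: contraTneq zx => ->.
  by rewrite mem1_Nclass -order_eq1 ox gtn_eqF ?prime_gt1.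
have oz : #[z] = q.
  apply/(prime_nt_dvdP q_pr); last by rewrite -(Gauss_dvdl _ cop_zp').
  by rewrite order_eq1.
by rewrite (eq_cycle_order zy xy) ?oz.
Qed.

End TrivialStarClass.

Section CriticalClass.
Variables (gT : finGroupType) (y : gT) (p r : nat).
Hypotheses (star1 : star_class gT = [set 1]) (p_pr : prime p) (r_gt1 : 1 < r).
Hypothesis hatC : hat (Nclass y) = Nclass y :|: [set 1].
Hypothesis card_hatC : #|hat (Nclass y)| = (p ^ r)%N.

Lemma critical_notin1 : 1 \notin Nclass y.
Proof.
rewrite mem1_Nclass //; apply/eqP => y1; move: card_hatC.
rewrite hatC y1 -[Nclass 1]/(star_class gT) star1 setUid cards1 => one_eq.
have : p ^ 0 < p ^ r by rewrite ltn_exp2l ?prime_gt1 // ltnW.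
by rewrite expn0 -one_eq ltnn.
Qed.

Lemma card_Nclass_critical : #|Nclass y|.+1 = (p ^ r)%N.
Proof. by rewrite -card_hatC hatC setUC cardsU1 critical_notin1 add1n. Qed.

Lemma hat_Nclass_cycle t q : t \in Nclass y -> Nclass y \subset <[t]> ->
  prime q -> q.-elt t -> hat (Nclass y) = <[t]>.
Proof.
move=> Ct sub_Ct q_pr qt; apply/eqP.
rewrite eqEsubset (p_elt_cycle_sub_hat q_pr qt Ct) andbT.
by rewrite hatC subUset sub_Ct sub1set group1.
Qed.

Lemma critical_not_Dclass_cycle :
  Nclass y != Dclass y -> exists2 t, t \in Nclass y & hat (Nclass y) = <[t]>.
Proof.
move=> nDy; have [t Ct sub_Ct] := Nclass_sub_cycle y.
have [k Ck nkt] : exists2 k, k \in Nclass y & <[k]> != <[t]>.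
  apply/exists_inP; apply: contraNT nDy => /exists_inPn all_t.
  rewrite eqEsubset Dclass_sub_Nclass andbT; apply/subsetP => z Cz; rewrite inE.
  by move: (all_t z Cz) (all_t y (Nclass_id y)); rewrite !negbK => /eqP-> /eqP->.
have k_nt : k != 1 by apply: contraNneq critical_notin1 => <-.
have q_pr : prime (pdiv #[k]) by rewrite pdiv_prime // order_gt1.
have qt := Nclass_cycle_p_elt Ct Ck (subsetP sub_Ct k Ck) nkt q_pr (pdiv_dvd _).
by exists t; last exact: hat_Nclass_cycle Ct sub_Ct q_pr qt.
Qed.

Lemma critical_witness_Dclass x : x \notin hat (Nclass y) ->
  #|Nclass x| <= #|Nclass y| -> padj x y -> Nclass y = Dclass y.
Proof.
move=> x_notin_hat le_Nx_C; rewrite padjE => /andP[_ x_y_cmp].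
apply/eqP; apply: contraT => nDy; have [t Ct hat_t] := critical_not_Dclass_cycle nDy.
have ot : #[t] = (p ^ r)%N by rewrite orderE -hat_t.
rewrite hat_t in x_notin_hat.
have tx : t \in <[x]>.
  have : y \in <[t]> by rewrite -hat_t hatC in_setU Nclass_id.
  rewrite -cycle_subG => yt; case/orP: x_y_cmp => [xy | yx].
    by rewrite (subsetP yt _ xy) in x_notin_hat.
  have : x \in Nb t by rewrite (Nclass_Nb Ct) mem_Nb yx orbT.
  by rewrite mem_Nb (negbTE x_notin_hat).
have p_dv_t : p %| #[t] by rewrite ot -{1}(expn1 p) dvdn_exp2l // ltnW.
set c := t ^+ (#[t] %/ p); have oc : #[c] = p := order_expg_div p_dv_t.
have Cc : c \in Nclass y.
  have : c \in hat (Nclass y) by rewrite hat_t mem_cycle.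
  rewrite hatC in_setU in_set1 => /orP[// | /eqP c1].
  by move: (prime_gt1 p_pr); rewrite -oc c1 order1.
have Nct : Nb c = Nb t by rewrite (Nclass_Nb Cc) (Nclass_Nb Ct).
have px := p_elt_over_cycle p_pr r_gt1 ot (mem_cycle _ _) oc Nct tx.
have lt_tx : #[t] < #[x].
  by rewrite !orderE proper_card // properE !cycle_subG tx x_notin_hat.
have : p ^ r <= #|Nclass y|.
  apply: leq_trans le_Nx_C; apply: leq_trans (subset_leq_card (Dclass_sub_Nclass x)).
  by rewrite card_Dclass leq_expn_totient // -ot.
by rewrite -card_Nclass_critical ltnn.
Qed.

Lemma critical_Dclass_not_p_elt q : Nclass y = Dclass y -> prime q -> ~~ q.-elt y.
Proof.
move=> Cy q_pr; apply/negP => qy.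
have sub_Cy : Nclass y \subset <[y]> by rewrite Cy Dclass_sub_cycle.
have hat_y := hat_Nclass_cycle (Nclass_id y) sub_Cy q_pr qy.
have oy : #[y] = (p ^ r)%N by rewrite orderE -hat_y.
have r1_gt0 : 0 < r.-1 by rewrite -subn1 subn_gt0.
have oyp : #[y ^+ p] = (p ^ r.-1)%N.
  by rewrite orderXdiv oy -{1}(prednK (ltnW r_gt1)) expnS ?mulKn ?prime_gt0 ?dvdn_mulr.
have : y ^+ p \in hat (Nclass y) by rewrite hat_y mem_cycle.
rewrite hatC Cy in_setU in_set1 inE => /orP[/eqP yp_y | /eqP yp1].
  have : p ^ r.-1 < p ^ r by rewrite ltn_exp2l ?prime_gt1 // prednK // ltnW.
  by rewrite -oy -oyp orderE yp_y -orderE ltnn.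
have : p ^ 0 < p ^ r.-1 by rewrite ltn_exp2l ?prime_gt1.
by rewrite expn0 -oyp yp1 order1 ltnn.
Qed.

Lemma critical_Dclass_witness : Nclass y = Dclass y ->
  exists x, x \notin hat (Nclass y) /\ #|Nclass x| <= #|Nclass y| /\ padj x y.
Proof.
move=> Cy; have y_nt : y != 1 by rewrite -(mem1_Nclass star1) critical_notin1.
set q := pdiv #[y]; have q_pr : prime q by rewrite pdiv_prime // order_gt1.
have [p' [p'_pr p'_dv_y neq_qp']] : exists p', [/\ prime p', p' %| #[y] & q != p'].
  have := critical_Dclass_not_p_elt Cy q_pr.
  rewrite /p_elt /pnat order_gt0 /= => /allPn[p'].
  rewrite mem_primes inE => /and3P[p'_pr _ p'_dv_y] neq_p'q.
  by exists p'; split=> //; rewrite eq_sym.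
have cop_qp' : coprime q p' by rewrite prime_coprime // dvdn_prime2.
have qp'_dv_y : q * p' %| #[y] by rewrite Gauss_dvd // pdiv_dvd.
set x := y ^+ (#[y] %/ q); have ox : #[x] = q := order_expg_div (pdiv_dvd _).
have xy : x \in <[y]> := mem_cycle _ _.
have neq_yq : #[y] != q.
  apply: contraNneq neq_qp' => oy; have : p' %| q by rewrite -oy.
  by rewrite dvdn_prime2 // eq_sym.
exists x; split; [|split].
- rewrite hatC Cy in_setU in_set1 inE negb_or; apply/andP; split.
    by apply: contra neq_yq => /eqP xy_eq; rewrite -ox !orderE xy_eq.
  by apply/eqP => x1; move: (prime_gt1 q_pr); rewrite -ox x1 order1.
- rewrite (Nclass_prime_order_cycle star1 q_pr p'_pr neq_qp' qp'_dv_y xy ox).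
  by rewrite Cy !card_Dclass ox totient_prime // leq_pred_totient // pdiv_dvd.
- rewrite padjE xy andbT; apply: contraNneq neq_yq => xy_eq.
  by rewrite -ox xy_eq.
Qed.

End CriticalClass.

Theorem mainTheorem2 (gT : finGroupType) (y : gT) :
  star_class gT = [set 1] ->
  critical (Nclass y) ->
  ((exists x : gT, x \notin hat (Nclass y) /\
       (#|Nclass x| <= #|Nclass y|)%N /\ padj x y)
   <-> first_type (Nclass y)).
Proof.
move=> star1 [_ [hatC [p [r [p_pr [r_gt1 card_hatC]]]]]].
have y_nstar : y \notin star_class gT.
  by rewrite star1 inE -(mem1_Nclass star1) (critical_notin1 star1 p_pr r_gt1 hatC card_hatC).
split=> [[x [x_notin_hat [le_Nx_C adj_xy]]] | /first_type_NclassE[_ Cy]].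
  apply/first_type_NclassE; split=> //.
  exact: (critical_witness_Dclass star1 p_pr r_gt1 hatC card_hatC x_notin_hat le_Nx_C adj_xy).
exact: critical_Dclass_witness star1 p_pr r_gt1 hatC card_hatC Cy.
Qed.
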